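(* Let $(F_S,\iota)$ be an embedded local étale algebra and let $\Gamma\subseteq\mathrm{PGL}_2(F_S)$ be a discrete and cocompact subgroup. Then $\Gamma$ is plectic with set of distinguished limit points $\mathcal L_{\Gamma,S}=\mathbb P^1(F_S)=\prod_{\mathfrak p\in S}\mathbb P^1(F_\mathfrak p)$, i.e. one may take $\mathcal L_{\Gamma,\mathfrak p}=\mathbb P^1(F_\mathfrak p)$ for every $\mathfrak p\in S$.
   Context: Fix a prime $p$ and let $\mathbf{C}$ be the completion of an algebraic closure of $\mathbb{Q}_p$ or of $\mathbb{F}_p((T))$. An embedded local étale algebra $(F_S,\iota)$ consists of a finite non-empty set $S$, non-Archimedean local fields $F_\mathfrak p$ ($\mathfrak p\in S$) of residue characteristic $p$ and of the same characteristic as $\mathbf C$, and embeddings $\iota_\mathfrak p\colon F_\mathfrak p\hookrightarrow\mathbf C$, through which $\mathbb P^1(F_\mathfrak p)\subseteq\mathbb P^1(\mathbf C)$. $\mathrm{PGL}_2(F_S)=\prod_\mathfrak p\mathrm{PGL}_2(F_\mathfrak p)$ (a locally compact group) acts componentwise by Möbius transformations on $\mathbb P^1(\mathbf C_S)=\prod_{\mathfrak p\in S}\mathbb P^1(\mathbf C)$. For a subgroup $\Gamma$, its limit set $\mathcal L^S_\Gamma$ is the set of $x\in\mathbb P^1(\mathbf C_S)$ such that $\gamma_j(y)\to x$ for some $y\in\mathbb P^1(\mathbf C_S)$ and pairwise distinct $\gamma_j\in\Gamma$. $\Gamma$ is called plectic if there are subsets $\mathcal L_{\Gamma,\mathfrak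 p}\subseteq\mathbb P^1(F_\mathfrak p)$ with $\mathcal L^S_\Gamma=\bigcup_{\mathfrak p\in S}\big(\mathcal L_{\Gamma,\mathfrak p}\times\prod_{\mathfrak q\in S\setminus\{\mathfrak p\}}\mathbb P^1(\mathbf C)\big)$; then $\mathcal L_{\Gamma,S}:=\prod_\mathfrak p\mathcal L_{\Gamma,\mathfrak p}$ is the set of distinguished limit points. *)

From mathcomp Require Import all_boot all_order all_algebra.
From mathcomp Require Import reals.

Set Implicit Arguments.
Unset Strict Implicit.
Unset Printing Implicit Defensive.

Import Order.TTheory GRing.Theory Num.Theory.
Local Open Scope ring_scope.

Section ValuedField.
Variables (R : realType) (C : fieldType) (v : C -> R).

Definition nonarch_abs : Prop :=
  [/\ forall x, 0 <= v x,
      forall x, v x = 0 <-> x = 0,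
      forall x y, v (x * y) = v x * v y &
      forall x y, v (x + y) <= Num.max (v x) (v y)].

Definition cvg_to (u : nat -> C) (x : C) : Prop :=
  forall e : R, 0 < e -> exists N, forall n, (N <= n)%N -> v (u n - x) < e.

Definition cauchy_seq (u : nat -> C) : Prop :=
  forall e : R, 0 < e -> exists N, forall m n, (N <= m)%N -> (N <= n)%N ->
    v (u m - u n) < e.

Definition complete_abs : Prop :=
  forall u, cauchy_seq u -> exists x, cvg_to u x.

Definition vclosure (A : C -> Prop) (x : C) : Prop :=
  exists u : nat -> C, (forall n, A (u n)) /\ cvg_to u x.

Definition algebraic_over (K : C -> Prop) (x : C) : Prop :=
  exists P : {poly C}, P != 0 /\ (forall i, K P`_i) /\ root P x.

Definition vdense (A : C -> Prop) : Prop :=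
  forall x (e : R), 0 < e -> exists y, A y /\ v (x - y) < e.

Definition rational_elt (x : C) : Prop :=
  exists m n : int, n != 0 /\ x = m%:~R / n%:~R.

Definition prime_subfield_elt (x : C) : Prop := exists n : nat, x = n%:R.

Definition rat_fun_elt (T x : C) : Prop :=
  exists P Q : {poly C}, (forall i, prime_subfield_elt P`_i) /\
    (forall i, prime_subfield_elt Q`_i) /\ Q.[T] != 0 /\ x = P.[T] / Q.[T].

(* C is (isometric, up to normalisation, to) the completion of an algebraic
   closure of Q_p, resp. of F_p((T)):  Q_p = closure of Q in C, F_p((T)) =
   closure of F_p(T) in C, and the elements algebraic over it are dense in
   the complete algebraically closed field C. *)
Definition completed_alg_closure_Qp_or_FpT (p : nat) : Prop :=
  [/\ nonarch_abs, complete_abs, GRing.closed_field_axiom C &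
     ([pchar C] =i pred0 /\ v p%:R < 1 /\
        vdense (algebraic_over (vclosure rational_elt)))
  \/ (p \in [pchar C] /\ exists T, (0 < v T < 1) /\
        vdense (algebraic_over (vclosure (rat_fun_elt T))))].

Definition subfield (F : C -> Prop) : Prop :=
  [/\ F 0, F 1, forall x y, F x -> F y -> F (x - y),
      forall x y, F x -> F y -> F (x * y) &
      forall x, F x -> x != 0 -> F x^-1].

Definition increasing_nat (phi : nat -> nat) : Prop :=
  forall n, (phi n < phi n.+1)%N.

(* (the image under the embedding of) a non-Archimedean local field:
   a non-discrete, locally compact subfield of C for the induced topology *)
Definition local_subfield (F : C -> Prop) : Prop :=
  [/\ subfield F,
      exists x, F x /\ 0 < v x < 1 &
      exists r : R, 0 < r /\
        forall u : nat -> C, (forall n, F (u n) /\ v (u n) <= r) ->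
          exists phi, increasing_nat phi /\
            exists x, (F x /\ v x <= r) /\ cvg_to (u \o phi) x].

(* ---------- the projective line P^1(C): nonzero column vectors ---------- *)
Definition pc0 (x : 'cV[C]_2) : C := x ord0 ord0.
Definition pc1 (x : 'cV[C]_2) : C := x ord_max ord0.

(* chordal distance (independent of the chosen homogeneous coordinates) *)
Definition chordal (x y : 'cV[C]_2) : R :=
  v (pc0 x * pc1 y - pc1 x * pc0 y) /
    (Num.max (v (pc0 x)) (v (pc1 x)) * Num.max (v (pc0 y)) (v (pc1 y))).

Definition P1_cvg (u : nat -> 'cV[C]_2) (x : 'cV[C]_2) : Prop :=
  forall e : R, 0 < e -> exists N, forall n, (N <= n)%N -> chordal (u n) x < e.

Definition P1_in (F : C -> Prop) (x : 'cV[C]_2) : Prop :=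
  exists l : C, l != 0 /\ F (pc0 (l *: x)) /\ F (pc1 (l *: x)).

Variables (S : finType) (F : S -> C -> Prop).

Definition GL2S (g : S -> 'M[C]_2) : Prop :=
  forall s, \det (g s) != 0 /\ forall i j, F s (g s i j).

Definition mulS (g h : S -> 'M[C]_2) : S -> 'M[C]_2 := fun s => g s *m h s.
Definition invS (g : S -> 'M[C]_2) : S -> 'M[C]_2 := fun s => invmx (g s).

Definition central (g : S -> 'M[C]_2) : Prop := forall s, exists l : C, g s = l%:M.

(* g and h define the same element of PGL_2(F_S) *)
Definition proj_eq (g h : S -> 'M[C]_2) : Prop :=
  forall s, exists l : C, l != 0 /\ h s = l *: g s.

(* A subgroup of PGL_2(F_S) is represented by its full preimage in
   GL_2(F_S): a subgroup of GL_2(F_S) containing the centre. *)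
Definition PGL2_subgroup (G : (S -> 'M[C]_2) -> Prop) : Prop :=
  [/\ forall g, G g -> GL2S g,
      forall z, GL2S z -> central z -> G z,
      forall g h, G g -> G h -> G (mulS g h) &
      forall g, G g -> G (invS g)].

(* discreteness in PGL_2(F_S): some neighbourhood of 1 meets G only in the
   centre (the quotient map GL_2 -> PGL_2 is open). *)
Definition PGL2_discrete (G : (S -> 'M[C]_2) -> Prop) : Prop :=
  exists e : R, 0 < e /\ forall g, G g ->
    (forall s i j, v (g s i j - (1%:M : 'M[C]_2) i j) < e) -> central g.

Definition compactS (K : (S -> 'M[C]_2) -> Prop) : Prop :=
  forall u : nat -> (S -> 'M[C]_2), (forall n, K (u n)) ->
    exists phi, increasing_nat phi /\ exists k, K k /\
      forall s i j, cvg_to (fun n => u (phi n) s i j) (k s i j).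

(* cocompactness: G \ PGL_2(F_S) compact, i.e. GL_2(F_S) = G K, K compact *)
Definition PGL2_cocompact (G : (S -> 'M[C]_2) -> Prop) : Prop :=
  exists K : (S -> 'M[C]_2) -> Prop,
    [/\ forall k, K k -> GL2S k, compactS K &
        forall g, GL2S g -> exists gam k, [/\ G gam, K k & g = mulS gam k]].

Definition P1S_pt (x : S -> 'cV[C]_2) : Prop := forall s, x s != 0.

Definition limit_point (G : (S -> 'M[C]_2) -> Prop) (x : S -> 'cV[C]_2) : Prop :=
  exists y : S -> 'cV[C]_2, P1S_pt y /\
    exists gam : nat -> (S -> 'M[C]_2),
      [/\ forall j, G (gam j),
          forall i j, i != j -> ~ proj_eq (gam i) (gam j) &
          forall s, P1_cvg (fun j => gam j s *m y s) (x s)].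

Definition plectic_with (G : (S -> 'M[C]_2) -> Prop)
    (Lp : S -> 'cV[C]_2 -> Prop) : Prop :=
  (forall s x, Lp s x -> P1_in (F s) x) /\
  forall x, P1S_pt x -> (limit_point G x <-> exists s, Lp s (x s)).

End ValuedField.

(* Let gamma_j in Gamma be pairwise distinct with gamma_j y -> x.  Rescaling
   gamma_j at every place so that its entries are integral with one of them a
   unit, compactness of the unit balls of the F_p gives a subsequence
   converging to a matrix M = (M_p) with every M_p nonzero.  If every M_p were
   invertible, gamma_i^-1 gamma_j would tend to 1, contradicting discreteness;
   so some M_p is singular.  Then M_p maps every vector outside its kernel
   into its image, an F_p-rational line, and x_p lies on that line; if instead
   y_p lies in the F_p-rational kernel, all gamma_j y_p are F_p-rational and
   x_p is too, P^1(F_p) being closed in P^1(C).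
   Conversely, let x_p be in P^1(F_p) and A in GL_2(F_p) with A e_1 in the
   class of x_p.  Cocompactness writes (A diag(1, pi^n), 1, ..., 1) = g_n k_n
   with g_n in Gamma and k_n in a compact set; along a subsequence k_n -> k,
   and since diag(1, pi^n) contracts towards e_1, g_n maps the point
   (k e_1 at p, k x_q at q <> p) to points converging to x.  The g_n are
   pairwise distinct: once k_m^-1 k_n is close to 1, the valuation |pi|^n is
   determined by the class of g_n. *)

From mathcomp Require Import all_boot all_order all_algebra.
From mathcomp Require Import reals.
From mathcomp Require Import ring.
From Stdlib Require Import ClassicalEpsilon.

Set Implicit Arguments.
Unset Strict Implicit.
Unset Printing Implicit Defensive.

Import Order.TTheory GRing.Theory Num.Theory.
Local Open Scope ring_scope.

Section TwoByTwo.
Variable C : fieldType.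

Lemma sum_ord2 (V : nmodType) (f : 'I_2 -> V) : \sum_i f i = f ord0 + f ord_max.
Proof.
by rewrite big_ord_recr big_ord_recr big_ord0 /= add0r; congr (f _ + f _); apply/val_inj.
Qed.

Lemma ord2P (i : 'I_2) : i = ord0 \/ i = ord_max.
Proof. by case: i => [[|[|k]] hk] //; [left|right]; apply: val_inj. Qed.

Definition mx2 (a b c d : C) : 'M[C]_2 :=
  \matrix_(i, j) if i == ord0 then (if j == ord0 then a else b)
                 else (if j == ord0 then c else d).

Definition cv2 (a b : C) : 'cV[C]_2 := \col_i (if i == ord0 then a else b).

Lemma mx2_eta (A : 'M[C]_2) :
  A = mx2 (A ord0 ord0) (A ord0 ord_max) (A ord_max ord0) (A ord_max ord_max).
Proof. by apply/matrixP => i j; rewrite mxE; case: (ord2P i) => ->; case: (ord2P j) => ->. Qed.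

Lemma cv2_eta (x : 'cV[C]_2) : x = cv2 (pc0 x) (pc1 x).
Proof. by apply/matrixP => i j; rewrite (ord1 j) mxE; case: (ord2P i) => ->. Qed.

Lemma pc0_cv2 a b : pc0 (cv2 a b) = a. Proof. by rewrite /pc0 mxE. Qed.
Lemma pc1_cv2 a b : pc1 (cv2 a b) = b. Proof. by rewrite /pc1 mxE. Qed.

Lemma cv2_eq0 a b : (cv2 a b == 0) = (a == 0) && (b == 0).
Proof.
apply/eqP/andP => [h | [/eqP-> /eqP->]].
  by split; apply/eqP; [move: (congr1 (@pc0 C) h) | move: (congr1 (@pc1 C) h)];
    rewrite ?pc0_cv2 ?pc1_cv2 /pc0 /pc1 mxE.
by apply/matrixP => i j; rewrite !mxE; case: ifP.
Qed.

Lemma scale_cv2 l a b : l *: cv2 a b = cv2 (l * a) (l * b).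
Proof. by apply/matrixP => i j; rewrite !mxE; case: ifP. Qed.

Lemma mul_mx2_cv2 a b c d x y :
  mx2 a b c d *m cv2 x y = cv2 (a * x + b * y) (c * x + d * y).
Proof. by apply/matrixP => i j; rewrite !mxE sum_ord2 !mxE; case: (ord2P i) => ->. Qed.

Lemma det_mx2 a b c d : \det (mx2 a b c d) = a * d - b * c.
Proof.
rewrite (expand_det_row _ ord0) sum_ord2 /cofactor !det_mx11 !mxE /=.
by rewrite expr0 expr1 mul1r mulN1r mulrN.
Qed.

Lemma adj_mx2 a b c d : \adj (mx2 a b c d) = mx2 d (- b) (- c) a.
Proof.
apply/matrixP => i j; rewrite !mxE /cofactor det_mx11 !mxE.
by case: (ord2P i) => ->; case: (ord2P j) => -> /=; ring.
Qed.

Lemma adj_mx2K (A : 'M[C]_2) : \adj (\adj A) = A.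
Proof. by rewrite [A]mx2_eta !adj_mx2 !opprK. Qed.

End TwoByTwo.

Lemma mulmx_neq0 (C : fieldType) n (g : 'M[C]_n) (y : 'cV[C]_n) :
  \det g != 0 -> y != 0 -> g *m y != 0.
Proof.
move=> hg; apply: contra_neq => hgy.
by rewrite -(mulKmx (_ : g \in unitmx) y) ?hgy ?mulmx0 // unitmxE unitfE.
Qed.

Section NonArchimedean.
Variables (R : realType) (C : fieldType) (v : C -> R).
Hypothesis hv : nonarch_abs v.

Lemma nav_ge0 x : 0 <= v x. Proof. by case: hv. Qed.

Lemma nav_eq0 x : (v x == 0) = (x == 0).
Proof. by case: hv => _ h _ _; apply/eqP/eqP => /h. Qed.

Lemma nav_gt0 x : x != 0 -> 0 < v x.
Proof. by move=> hx; rewrite lt_def nav_ge0 nav_eq0 hx. Qed.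

Lemma navM x y : v (x * y) = v x * v y. Proof. by case: hv. Qed.

Lemma nav0 : v 0 = 0. Proof. by apply/eqP; rewrite nav_eq0. Qed.

Lemma nav1 : v 1 = 1.
Proof.
have h : v 1 * v 1 = v 1 * 1 by rewrite -navM !mulr1.
by apply: mulfI h; rewrite nav_eq0 oner_eq0.
Qed.

Lemma navN x : v (- x) = v x.
Proof.
have vN1 : v (-1) = 1.
  have /eqP : v (-1) ^+ 2 = 1 by rewrite expr2 -navM mulrNN mulr1 nav1.
  rewrite sqrf_eq1 => /orP[/eqP // | /eqP vN1].
  by have := nav_ge0 (-1); rewrite vN1 ler0N1.
by rewrite -mulN1r navM vN1 mul1r.
Qed.

Lemma navB x y : v (x - y) = v (y - x). Proof. by rewrite -navN opprB. Qed.

Lemma navV x : v x^-1 = (v x)^-1.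
Proof.
have [->|hx] := eqVneq x 0; first by rewrite invr0 nav0 invr0.
by apply: (mulfI (lt0r_neq0 (nav_gt0 hx))); rewrite -navM !mulfV ?nav1 ?lt0r_neq0 ?nav_gt0.
Qed.

Lemma navX x n : v (x ^+ n) = v x ^+ n.
Proof. by elim: n => [|n ih]; rewrite ?expr0 ?nav1 // !exprS navM ih. Qed.

Lemma navD_le x y c : v x <= c -> v y <= c -> v (x + y) <= c.
Proof. by case: hv => _ _ _ h hx hy; apply: le_trans (h x y) _; rewrite ge_max hx hy. Qed.

Lemma navD_lt x y c : v x < c -> v y < c -> v (x + y) < c.
Proof. by case: hv => _ _ _ h hx hy; apply: le_lt_trans (h x y) _; rewrite gt_max hx hy. Qed.

Lemma navB_lt x y c : v x < c -> v y < c -> v (x - y) < c.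
Proof. by move=> hx hy; apply: navD_lt; rewrite ?navN. Qed.

Lemma nav_eq_of_ltB x y : v (x - y) < v y -> v x = v y.
Proof.
move=> hxy; apply/eqP; rewrite eq_le; apply/andP; split.
  by rewrite -(subrK y x); apply: navD_le => //; apply: ltW.
rewrite leNgt; apply/negP => hx.
by have := navB_lt hx hxy; rewrite opprB addrC subrK ltxx.
Qed.

Lemma max_nav_near a b a' b' :
  v (a' - a) < Num.max (v a) (v b) -> v (b' - b) < Num.max (v a) (v b) ->
  Num.max (v a') (v b') = Num.max (v a) (v b).
Proof.
wlog hba : a b a' b' / v b <= v a => [hwlog|].
  case/orP: (le_total (v b) (v a)) => [hba|hab]; first exact: hwlog.
  by rewrite [Num.max (v a) _]maxC [Num.max (v a') _]maxC => ha hb; apply: hwlog.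
rewrite (max_l hba) => ha hb; have va := nav_eq_of_ltB ha.
by rewrite va max_l // -(subrK b b'); apply: navD_le => //; apply: ltW.
Qed.

End NonArchimedean.

Definition eventually (P : nat -> Prop) : Prop := exists N, forall n, (N <= n)%N -> P n.

Lemma eventually_and (P Q : nat -> Prop) :
  eventually P -> eventually Q -> eventually (fun n => P n /\ Q n).
Proof.
move=> [N1 h1] [N2 h2]; exists (maxn N1 N2) => n; rewrite geq_max => /andP[n1 n2].
by split; [apply: h1 | apply: h2].
Qed.

Lemma eventually_mono (P Q : nat -> Prop) :
  (forall n, P n -> Q n) -> eventually P -> eventually Q.
Proof. by move=> h [N hN]; exists N => n /hN /h. Qed.

Lemma eventually_forall (I : finType) (P : I -> nat -> Prop) :
  (forall i, eventually (P i)) -> eventually (fun n => forall i, P i n).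
Proof.
move=> h; suff [N hN] : eventually (fun n => forall i, i \in enum I -> P i n).
  by exists N => n /hN hn i; apply: hn; rewrite mem_enum.
elim: (enum I) => [|i s ih]; first by exists 0%N.
apply: eventually_mono (eventually_and (h i) ih) => n [hi hs] j.
by rewrite in_cons => /orP[/eqP-> // | /hs].
Qed.

Lemma increasing_nat_ge (phi : nat -> nat) : increasing_nat phi -> forall n, (n <= phi n)%N.
Proof. by move=> h; elim=> // n ih; apply: leq_ltn_trans ih (h n). Qed.

Lemma increasing_nat_homo (phi : nat -> nat) : increasing_nat phi -> {homo phi : m n / (m < n)%N}.
Proof. exact: homo_ltn ltn_trans. Qed.

Lemma increasing_nat_comp (phi psi : nat -> nat) :
  increasing_nat phi -> increasing_nat psi -> increasing_nat (phi \o psi).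
Proof. by move=> h1 h2 n; apply: (increasing_nat_homo h1). Qed.

Lemma increasing_nat_inj (phi : nat -> nat) : increasing_nat phi -> injective phi.
Proof. by move=> h; apply: incn_inj; apply: leq_mono; apply: increasing_nat_homo. Qed.

Lemma eventually_subseq (P : nat -> Prop) (phi : nat -> nat) :
  increasing_nat phi -> eventually P -> eventually (P \o phi).
Proof.
move=> hphi [N hN]; exists N => n hn; apply: hN.
exact: leq_trans hn (increasing_nat_ge hphi n).
Qed.

Lemma ler_ltM (R : realFieldType) (a b B e : R) :
  0 <= a -> a <= B -> 0 <= b -> b < e -> 0 < B -> a * b < B * e.
Proof. by move=> ha haB hb hbe hB; apply: le_lt_trans (ler_wpM2r hb haB) _; rewrite ltr_pM2l. Qed.

Section Convergence.
Variables (R : realType) (C : fieldType) (v : C -> R).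
Hypothesis hv : nonarch_abs v.
Local Notation cvg := (cvg_to v).

Lemma cvg_cst c : cvg (fun=> c) c.
Proof. by move=> e he; exists 0%N => n _; rewrite subrr (nav0 hv). Qed.

Lemma cvg_eventually_eq u w x : eventually (fun n => u n = w n) -> cvg u x -> cvg w x.
Proof. by move=> he hu e /hu h; apply: eventually_mono (eventually_and he h) => n [<-]. Qed.

Lemma cvg_subseq u x (phi : nat -> nat) : increasing_nat phi -> cvg u x -> cvg (u \o phi) x.
Proof. by move=> hphi hu e /hu; apply: eventually_subseq. Qed.

Lemma cvgD u w x y : cvg u x -> cvg w y -> cvg (fun n => u n + w n) (x + y).
Proof.
move=> hu hw e he; apply: eventually_mono (eventually_and (hu e he) (hw e he)) => n [h1 h2].
by rewrite opprD addrACA; apply: (navD_lt hv).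
Qed.

Lemma cvgN u x : cvg u x -> cvg (fun n => - u n) (- x).
Proof. by move=> hu e /hu; apply: eventually_mono => n; rewrite -opprD (navN hv). Qed.

Lemma cvgB u w x y : cvg u x -> cvg w y -> cvg (fun n => u n - w n) (x - y).
Proof. by move=> hu hw; apply: cvgD => //; apply: cvgN. Qed.

Lemma cvg_eventually_le u x : cvg u x -> eventually (fun n => v (u n) <= v x + 1).
Proof.
move=> hu; apply: eventually_mono (hu 1 ltr01) => n hn.
rewrite -(subrK x (u n)); apply: (navD_le hv).
  by apply: le_trans (ltW hn) _; rewrite lerDr (nav_ge0 hv).
by rewrite lerDl ler01.
Qed.

Lemma cvg_eventually_nav u x : cvg u x -> x != 0 -> eventually (fun n => v (u n) = v x).
Proof.
by move=> hu hx; apply: eventually_mono (hu _ (nav_gt0 hv hx)) => n /(nav_eq_of_ltB hv).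
Qed.

Lemma cvgM u w x y : cvg u x -> cvg w y -> cvg (fun n => u n * w n) (x * y).
Proof.
move=> hu hw e he; set B := v x + v y + 1.
have hB : 0 < B by rewrite ltr_wpDl ?addr_ge0 ?(nav_ge0 hv).
have heB : 0 < e / B by rewrite divr_gt0.
have eB : e = B * (e / B) by rewrite mulrC divfK ?gt_eqF.
apply: eventually_mono (eventually_and (eventually_and (hu _ heB) (hw _ heB))
  (cvg_eventually_le hw)) => n [[hx hy] hwn].
have -> : u n * w n - x * y = (u n - x) * w n + x * (w n - y) by ring.
apply: (navD_lt hv); rewrite (navM hv) eB.
- rewrite mulrC ler_ltM ?(nav_ge0 hv) //.
  by apply: le_trans hwn _; rewrite /B lerD2r lerDr (nav_ge0 hv).
- by rewrite ler_ltM ?(nav_ge0 hv) // /B -addrA lerDl addr_ge0 ?(nav_ge0 hv).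
Qed.

Lemma cvgV u x : cvg u x -> x != 0 -> cvg (fun n => (u n)^-1) x^-1.
Proof.
move=> hu hx e he; have hvx := nav_gt0 hv hx.
apply: eventually_mono (eventually_and (hu _ (mulr_gt0 he (mulr_gt0 hvx hvx)))
  (cvg_eventually_nav hu hx)) => n [hn hvn].
have hun : u n != 0 by rewrite -(nav_eq0 hv) hvn (nav_eq0 hv).
have -> : (u n)^-1 - x^-1 = (x - u n) * ((u n)^-1 * x^-1) by field; apply/andP.
by rewrite !(navM hv) !(navV hv) hvn (navB hv) -invfM ltr_pdivrMr ?mulr_gt0.
Qed.

End Convergence.

Lemma exists_expr_le (R : archiRealFieldType) (q r : R) :
  0 <= q -> q < 1 -> 0 < r -> exists k, q ^+ k <= r.
Proof.
move=> hq0 hq1 hr; have [->|hq] := eqVneq q 0; first by exists 1%N; rewrite expr1 ltW.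
have hqp : 0 < q by rewrite lt_def hq hq0.
set h := q^-1 - 1; have hh : 0 < h by rewrite /h subr_gt0 invf_gt1.
have bernoulli (k : nat) : 1 + k%:R * h <= (1 + h) ^+ k.
  elim: k => [|k ih]; first by rewrite mul0r addr0 expr0.
  rewrite exprS -natr1 mulrDl mul1r.
  apply: le_trans (_ : (1 + h) * (1 + k%:R * h) <= _); last first.
    by rewrite ler_wpM2l // addr_ge0 // ltW.
  have -> : (1 + h) * (1 + k%:R * h) = 1 + (k%:R * h + h) + h * (k%:R * h) by ring.
  by rewrite lerDl !mulr_ge0 // ltW.
have hb : 0 <= (r * h)^-1 by rewrite invr_ge0 mulr_ge0 ?ltW.
exists (Num.bound (r * h)^-1); have := archi_boundP hb; set k := Num.bound _ => hk.
have hqk : r^-1 < (1 + h) ^+ k.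
  by apply: lt_le_trans (bernoulli k); rewrite ltr_wpDl // -ltr_pdivrMr // -invfM.
move: hqk; have -> : 1 + h = q^-1 by rewrite /h addrC subrK.
by rewrite exprVn ltf_pV2 ?posrE ?exprn_gt0 // => /ltW.
Qed.

Definition entries_in (C : fieldType) m n (F : C -> Prop) (A : 'M[C]_(m, n)) : Prop :=
  forall i j, F (A i j).

Section Subfield.
Variables (C : fieldType) (F : C -> Prop).
Hypothesis hF : subfield F.

Lemma subfield0 : F 0. Proof. by case: hF. Qed.
Lemma subfield1 : F 1. Proof. by case: hF. Qed.
Lemma subfieldB x y : F x -> F y -> F (x - y). Proof. by case: hF => _ _ h _ _; apply: h. Qed.
Lemma subfieldM x y : F x -> F y -> F (x * y). Proof. by case: hF => _ _ _ h _; apply: h. Qed.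

Lemma subfieldV x : F x -> F x^-1.
Proof. by have [->|hx] := eqVneq x 0; [rewrite invr0 | case: hF => _ _ _ _ h /h; apply]. Qed.

Lemma subfieldN x : F x -> F (- x).
Proof. by move=> hx; rewrite -sub0r; apply: subfieldB => //; apply: subfield0. Qed.

Lemma subfieldD x y : F x -> F y -> F (x + y).
Proof. by move=> hx hy; rewrite -(opprK y); apply: subfieldB => //; apply: subfieldN. Qed.

Lemma subfieldX x n : F x -> F (x ^+ n).
Proof.
by move=> hx; elim: n => [|n ih]; [rewrite expr0; apply: subfield1 | rewrite exprS; apply: subfieldM].
Qed.

Lemma entries_in_mul m n p (A : 'M[C]_(m, n)) (B : 'M[C]_(n, p)) :
  entries_in F A -> entries_in F B -> entries_in F (A *m B).
Proof.
move=> hA hB i j; rewrite mxE; apply: (big_ind F subfield0 subfieldD) => k _.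
exact: subfieldM.
Qed.

Lemma entries_in_scale m n c (A : 'M[C]_(m, n)) :
  F c -> entries_in F A -> entries_in F (c *: A).
Proof. by move=> hc hA i j; rewrite mxE; apply: subfieldM. Qed.

Lemma entries_in_scalar n c : F c -> entries_in F (c%:M : 'M[C]_n).
Proof. by move=> hc i j; rewrite mxE; case: eqP => _; rewrite ?mulr1n ?mulr0n //; apply: subfield0. Qed.

Lemma entries_in_mx2 a b c d : F a -> F b -> F c -> F d -> entries_in F (mx2 a b c d).
Proof. by move=> ha hb hc hd i j; rewrite mxE; do 2 case: ifP. Qed.

Lemma entries_in_adj (A : 'M[C]_2) : entries_in F A -> entries_in F (\adj A).
Proof. by move=> hA; rewrite [A]mx2_eta adj_mx2; apply: entries_in_mx2; try apply: subfieldN. Qed.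

End Subfield.

Definition diag_pow (C : fieldType) (pi : C) (n : nat) : 'M[C]_2 := mx2 1 0 0 (pi ^+ n).

Lemma det_diag_pow (C : fieldType) (pi : C) n : \det (diag_pow pi n) = pi ^+ n.
Proof. by rewrite det_mx2 mulr0 subr0 mul1r. Qed.

Lemma entries_in_diag_pow (C : fieldType) (F : C -> Prop) pi n :
  subfield F -> F pi -> entries_in F (diag_pow pi n).
Proof.
move=> hF hpi; apply: entries_in_mx2 => //;
  by [apply: subfield1 | apply: subfield0 | apply: subfieldX].
Qed.

Lemma first_column_GL2 (C : fieldType) (F : C -> Prop) (a : 'cV[C]_2) :
  subfield F -> entries_in F a -> a != 0 ->
  exists A, [/\ entries_in F A, \det A != 0 & A *m cv2 1 0 = a].
Proof.
move=> hF haF; rewrite [a]cv2_eta cv2_eq0 negb_and.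
have [F0 F1] := (subfield0 hF, subfield1 hF).
have [F00 F10] : F (pc0 a) /\ F (pc1 a) by split; apply: haF.
have [a0|a0] /= := eqVneq (pc0 a) 0 => ha.
- exists (mx2 (pc0 a) 1 (pc1 a) 0); split; first exact: entries_in_mx2.
  + by rewrite det_mx2 a0 mulr0 mul1r sub0r oppr_eq0.
  + by rewrite mul_mx2_cv2 !mulr1 !mulr0 !addr0.
- exists (mx2 (pc0 a) 0 (pc1 a) 1); split; first exact: entries_in_mx2.
  + by rewrite det_mx2 mulr1 mul0r subr0.
  + by rewrite mul_mx2_cv2 !mulr1 !mulr0 !addr0.
Qed.

Section LocalCompactness.
Variables (R : realType) (C : fieldType) (v : C -> R).
Hypothesis hv : nonarch_abs v.
Local Notation cvg := (cvg_to v).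

Lemma local_subfield_small F r :
  local_subfield v F -> 0 < r -> exists c, [/\ F c, c != 0 & v c <= r].
Proof.
case=> hF [pi [Fpi /andP[h0 h1]]] _ hr.
have [k hk] := exists_expr_le (ltW h0) h1 hr.
exists (pi ^+ k); split; first exact: subfieldX.
  by rewrite expf_neq0 // -(nav_eq0 hv) gt_eqF.
by rewrite (navX hv).
Qed.

Lemma local_subfield_ball_compact F u :
  local_subfield v F -> (forall n, F (u n) /\ v (u n) <= 1) ->
  exists phi, increasing_nat phi /\ exists x, F x /\ cvg (u \o phi) x.
Proof.
move=> hl hu; have [hF _ [r [hr hcomp]]] := hl.
have [c [Fc c0 vc]] := local_subfield_small hl hr.
have [|phi [hphi [x [[Fx _] hx]]]] := hcomp (fun n => c * u n).
  move=> n; have [Fun vun] := hu n; split; first exact: subfieldM.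
  by rewrite (navM hv); apply: le_trans (ler_wpM2l (nav_ge0 hv c) vun) _; rewrite mulr1.
exists phi; split => //; exists (c^-1 * x); split.
  by apply: subfieldM => //; apply: subfieldV.
apply: (cvg_eventually_eq (u := fun n => c^-1 * (c * u (phi n)))).
  by exists 0%N => n _; rewrite mulKf.
exact: (cvgM hv (u := fun=> c^-1) (cvg_cst hv _) hx).
Qed.

Lemma local_subfield_family_compact (I : finType) (Fi : I -> C -> Prop) (u : I -> nat -> C) :
  (forall i, local_subfield v (Fi i)) -> (forall i n, Fi i (u i n) /\ v (u i n) <= 1) ->
  exists phi, increasing_nat phi /\ forall i, exists x, Fi i x /\ cvg (u i \o phi) x.
Proof.
move=> hl hu.
suff [phi [hphi h]] : exists phi, increasing_nat phi /\
    forall i, i \in enum I -> exists x, Fi i x /\ cvg (u i \o phi) x.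
  by exists phi; split => // i; apply: h; rewrite mem_enum.
elim: (enum I) => [|i s [phi [hphi ih]]]; first by exists id; split.
have [psi [hpsi [x hx]]] := local_subfield_ball_compact (hl i) (fun n => hu i (phi n)).
exists (phi \o psi); split; first exact: increasing_nat_comp.
move=> j; rewrite in_cons => /orP[/eqP-> | /ih[y [Fy hy]]]; first by exists x.
by exists y; split => //; apply: cvg_subseq hpsi hy.
Qed.

Lemma normalize_family (I : finType) F (f : I -> C) :
  subfield F -> (forall i, F (f i)) -> (exists i, f i != 0) ->
  exists c, [/\ F c, c != 0, forall i, v (c * f i) <= 1 & exists i, v (c * f i) = 1].
Proof.
move=> hF hf [i1 hi1].
have [i0 _ hmax] := @arg_maxP _ _ I i1 xpredT (fun i => v (f i)) isT.
have hp : 0 < v (f i0) by apply: lt_le_trans (nav_gt0 hv hi1) (hmax i1 isT).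
have hi0 : f i0 != 0 by rewrite -(nav_eq0 hv) gt_eqF.
exists (f i0)^-1; split; first exact: subfieldV.
- by rewrite invr_neq0.
- by move=> i; rewrite (navM hv) (navV hv) mulrC ler_pdivrMr // mul1r; apply: hmax.
- by exists i0; rewrite mulVf // (nav1 hv).
Qed.

Lemma cvg_family_neq0 (I : finType) (w : I -> nat -> C) x :
  (forall i, cvg (w i) (x i)) -> (forall n, exists i, v (w i n) = 1) -> exists i, x i != 0.
Proof.
move=> hw h1; have [N hN] := eventually_forall (fun i => hw i 1 ltr01).
have [i hi] := h1 N; exists i; apply/eqP => x0.
by have := hN N (leqnn N) i; rewrite x0 subr0 hi ltxx.
Qed.

Definition mx_cvg m n (A : nat -> 'M[C]_(m, n)) (B : 'M[C]_(m, n)) : Prop :=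
  forall i j, cvg (fun k => A k i j) (B i j).

Lemma projective_compact (J : finType) m n (Fj : J -> C -> Prop)
    (A : nat -> J -> 'M[C]_(m, n)) :
  (forall j, local_subfield v (Fj j)) ->
  (forall k j, entries_in (Fj j) (A k j)) -> (forall k j, A k j != 0) ->
  exists (c : nat -> J -> C) (phi : nat -> nat) (L : J -> 'M[C]_(m, n)),
  [/\ forall k j, Fj j (c k j) /\ c k j != 0, increasing_nat phi,
      forall j, entries_in (Fj j) (L j) /\ L j != 0 &
      forall j, mx_cvg (fun k => c (phi k) j *: A (phi k) j) (L j)].
Proof.
move=> hl hA hA0.
have /choice[c hc] : forall kj : nat * J, exists c, [/\ Fj kj.2 c, c != 0,
    forall ab : 'I_m * 'I_n, v (c * A kj.1 kj.2 ab.1 ab.2) <= 1 &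
    exists ab : 'I_m * 'I_n, v (c * A kj.1 kj.2 ab.1 ab.2) = 1].
  move=> [k j]; apply: normalize_family.
  - by case: (hl j).
  - by move=> ab; apply: hA.
  - by have /matrix0Pn[a [b hab]] := hA0 k j; exists (a, b).
pose u (t : J * 'I_m * 'I_n) k := c (k, t.1.1) * A k t.1.1 t.1.2 t.2.
have [|phi [hphi /choice[L hL]]] :=
  local_subfield_family_compact (fun t : J * 'I_m * 'I_n => hl t.1.1) (u := u).
  move=> [[j a] b] k; have [Fc _ hle _] := hc (k, j); split; last exact: (hle (a, b)).
  by apply: subfieldM => //; [case: (hl j) | apply: hA].
have hLcvg j a b : cvg (fun k => (c (phi k, j) *: A (phi k) j) a b) (L (j, a, b)).
  by apply: cvg_eventually_eq (proj2 (hL (j, a, b))); exists 0%N => k _; rewrite mxE.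
exists (fun k j => c (k, j)), phi, (fun j => \matrix_(a, b) L (j, a, b)); split => //.
- by move=> k j; have [] := hc (k, j).
- move=> j; split; first by move=> a b; rewrite mxE; case: (hL (j, a, b)).
  have [|[a b] hab] := cvg_family_neq0 (fun ab : 'I_m * 'I_n => hLcvg j ab.1 ab.2).
    by move=> k; have [_ _ _ [ab hab]] := hc (phi k, j); exists ab; rewrite mxE.
  by apply/matrix0Pn; exists a, b; rewrite mxE.
- by move=> j a b; rewrite mxE; apply: hLcvg.
Qed.

End LocalCompactness.

Definition wedge (C : fieldType) (x y : 'cV[C]_2) : C := pc0 x * pc1 y - pc1 x * pc0 y.

Section Wedge.
Variable C : fieldType.
Implicit Types (x y u : 'cV[C]_2) (l : C).

Lemma wedgeZl l x y : wedge (l *: x) y = l * wedge x y.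
Proof. by rewrite /wedge /pc0 /pc1 !mxE; ring. Qed.

Lemma wedgexx x : wedge x x = 0.
Proof. by rewrite /wedge mulrC subrr. Qed.

Lemma wedge_eq0_proportional u x :
  u != 0 -> x != 0 -> wedge u x = 0 -> exists2 l, l != 0 & u = l *: x.
Proof.
rewrite [u]cv2_eta [x]cv2_eta /wedge !pc0_cv2 !pc1_cv2 !cv2_eq0 !negb_and.
move: (pc0 u) (pc1 u) (pc0 x) (pc1 x) => a b c d hab hcd /eqP; rewrite subr_eq0 => /eqP e.
have [c0|c0] := eqVneq c 0.
  have d0 : d != 0 by rewrite c0 eqxx in hcd.
  have : a * d == 0 by rewrite e c0 mulr0.
  rewrite mulf_eq0 (negbTE d0) orbF => /eqP a0.
  have b0 : b != 0 by rewrite a0 eqxx in hab.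
  by exists (b / d); rewrite ?mulf_neq0 ?invr_neq0 // scale_cv2 c0 a0 mulr0 divfK.
have a0 : a != 0.
  apply: contraTneq hab => a0; rewrite a0 eqxx /= negbK.
  by move/eqP: e; rewrite a0 mul0r eq_sym mulf_eq0 (negbTE c0) orbF.
exists (a / c); rewrite ?mulf_neq0 ?invr_neq0 // scale_cv2 divfK //.
by rewrite mulrAC e mulfK.
Qed.

End Wedge.

Section MatrixConvergence.
Variables (R : realType) (C : fieldType) (v : C -> R).
Hypothesis hv : nonarch_abs v.
Local Notation cvg := (cvg_to v).
Local Notation mx_cvg := (mx_cvg v).

Lemma mx_cvg_cst m n (B : 'M[C]_(m, n)) : mx_cvg (fun=> B) B.
Proof. by move=> i j; apply: cvg_cst. Qed.

Lemma mx_cvg_subseq m n (A : nat -> 'M[C]_(m, n)) B (phi : nat -> nat) :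
  increasing_nat phi -> mx_cvg A B -> mx_cvg (A \o phi) B.
Proof. by move=> hphi hA i j; apply: (cvg_subseq (u := fun k => A k i j)). Qed.

Lemma mx_cvgM m p (A : nat -> 'M[C]_(m, 2)) (B : nat -> 'M[C]_(2, p)) A' B' :
  mx_cvg A A' -> mx_cvg B B' -> mx_cvg (fun k => A k *m B k) (A' *m B').
Proof.
move=> hA hB i j; rewrite mxE sum_ord2.
apply: (cvg_eventually_eq (u := fun k => A k i ord0 * B k ord0 j + A k i ord_max * B k ord_max j)).
  by exists 0%N => k _; rewrite mxE sum_ord2.
by apply: (cvgD hv); apply: (cvgM hv).
Qed.

Lemma mx_cvg_det (A : nat -> 'M[C]_2) M : mx_cvg A M -> cvg (fun k => \det (A k)) (\det M).
Proof.
move=> hA; rewrite [M]mx2_eta det_mx2.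
apply: (cvg_eventually_eq (u := fun k => A k ord0 ord0 * A k ord_max ord_max
   - A k ord0 ord_max * A k ord_max ord0)).
  by exists 0%N => k _; rewrite [A k]mx2_eta det_mx2 !mxE.
by apply: (cvgB hv); apply: (cvgM hv).
Qed.

Lemma mx_cvg_eventually_unit (A : nat -> 'M[C]_2) M :
  mx_cvg A M -> \det M != 0 -> eventually (fun k => A k \in unitmx).
Proof.
move=> hA hM; apply: eventually_mono (cvg_eventually_nav hv (mx_cvg_det hA) hM) => k hk.
by rewrite unitmxE unitfE -(nav_eq0 hv) hk (nav_eq0 hv).
Qed.

Lemma mx_cvg_inv (A : nat -> 'M[C]_2) M :
  mx_cvg A M -> \det M != 0 -> mx_cvg (fun k => invmx (A k)) (invmx M).
Proof.
have invE (B : 'M[C]_2) i j : B \in unitmx ->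
    invmx B i j = (\det B)^-1 * ((-1) ^+ (j + i) * B (lift j 0) (lift i 0)).
  by move=> hB; rewrite /invmx hB !mxE /cofactor det_mx11 !mxE.
move=> hA hM i j; rewrite invE ?unitmxE ?unitfE //.
apply: (cvg_eventually_eq (u := fun k =>
    (\det (A k))^-1 * ((-1) ^+ (j + i) * A k (lift j 0) (lift i 0)))).
  by apply: eventually_mono (mx_cvg_eventually_unit hA hM) => k /invE ->.
apply: (cvgM hv); first exact: (cvgV hv (mx_cvg_det hA)).
exact: (cvgM hv (cvg_cst hv _)).
Qed.

Lemma mx_cvg_ext m n (A B : nat -> 'M[C]_(m, n)) M :
  (forall k, A k = B k) -> mx_cvg A M -> mx_cvg B M.
Proof. by move=> hAB hA i j; apply: cvg_eventually_eq (hA i j); exists 0%N => k _; rewrite hAB. Qed.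

Lemma factor_mul_cvg (h gm km : nat -> 'M[C]_2) k z (psi : nat -> nat) :
  (forall n, h n = gm n *m km n /\ km n \in unitmx) -> \det k != 0 -> mx_cvg (km \o psi) k ->
  exists2 w : nat -> 'cV[C]_2, mx_cvg w z & forall n, gm (psi n) *m (k *m z) = h (psi n) *m w n.
Proof.
move=> hfac hk hkm; exists (fun n => invmx (km (psi n)) *m (k *m z)).
  have := mx_cvgM (mx_cvg_inv hkm hk) (mx_cvg_cst (k *m z)).
  by rewrite mulmxA mulVmx ?mul1mx // unitmxE unitfE.
by move=> n; have [-> hu] := hfac (psi n); rewrite !mulmxA mulmxK.
Qed.

Lemma mx_cvg_bounded m n (A : nat -> 'M[C]_(m, n)) B :
  mx_cvg A B -> exists2 K, 0 < K & eventually (fun k => forall i j, v (A k i j) <= K).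
Proof.
move=> hA; exists (1 + \sum_(t : 'I_m * 'I_n) v (B t.1 t.2)).
  by rewrite ltr_wpDr ?sumr_ge0 // => t _; apply: nav_ge0.
apply: eventually_forall => i; apply: eventually_forall => j.
apply: eventually_mono (cvg_eventually_le hv (hA i j)) => k hk.
apply: le_trans hk _; rewrite addrC lerD2l (bigD1 (i, j)) //= lerDl.
by rewrite sumr_ge0 // => t _; apply: nav_ge0.
Qed.

Lemma invmx_mul_near1 (A : nat -> 'M[C]_2) M e :
  mx_cvg A M -> \det M != 0 -> 0 < e ->
  eventually (fun N => forall i j, (N <= i)%N -> (N <= j)%N -> forall a b,
    v ((invmx (A i) *m A j) a b - (1%:M : 'M[C]_2) a b) < e).
Proof.
move=> hA hM he; have [K hK hBK] := mx_cvg_bounded (mx_cvg_inv hA hM).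
have heK : 0 < e / K by rewrite divr_gt0.
have [N hN] := eventually_and (eventually_and hBK (mx_cvg_eventually_unit hA hM))
  (eventually_forall (fun a => eventually_forall (fun b => hA a b _ heK))).
exists N => N' hN' i j hi hj a b.
have [[hBi hAi] hMi] := hN i (leq_trans hN' hi); have [_ hMj] := hN j (leq_trans hN' hj).
have -> : (invmx (A i) *m A j) a b - (1%:M : 'M[C]_2) a b
    = (invmx (A i) *m (A j - A i)) a b by rewrite mulmxBr mulVmx // !mxE.
have eK : e = K * (e / K) by rewrite mulrC divfK ?gt_eqF.
have term k : v (invmx (A i) a k * (A j - A i) k b) < e.
  rewrite (navM hv) eK ler_ltM ?(nav_ge0 hv) // !mxE.
  have -> : A j k b - A i k b = (A j k b - M k b) - (A i k b - M k b) by ring.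
  exact: (navB_lt hv).
by rewrite mxE sum_ord2; apply: (navD_lt hv).
Qed.

End MatrixConvergence.

Section Chordal.
Variables (R : realType) (C : fieldType) (v : C -> R).
Hypothesis hv : nonarch_abs v.
Local Notation mx_cvg := (mx_cvg v).
Implicit Types (x y : 'cV[C]_2) (w : nat -> 'cV[C]_2).

Definition vnorm x : R := Num.max (v (pc0 x)) (v (pc1 x)).

Lemma vnorm_gt0 x : x != 0 -> 0 < vnorm x.
Proof.
rewrite /vnorm [x]cv2_eta cv2_eq0 negb_and !pc0_cv2 !pc1_cv2.
by case/orP=> /(nav_gt0 hv) h; rewrite lt_max h ?orbT.
Qed.

Lemma vnormZ l x : vnorm (l *: x) = v l * vnorm x.
Proof. by rewrite /vnorm /pc0 /pc1 !mxE !(navM hv) maxr_pMr // nav_ge0. Qed.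

Lemma chordalZl l x y : l != 0 -> chordal v (l *: x) y = chordal v x y.
Proof.
move=> hl; rewrite /chordal -/(wedge _ _) -/(wedge x y) -/(vnorm _) -/(vnorm x) -/(vnorm y).
rewrite wedgeZl vnormZ (navM hv) -[v l * vnorm x * _]mulrA -mulf_div divff ?mul1r //.
by rewrite (nav_eq0 hv).
Qed.

Lemma P1_cvg_proj (c : nat -> C) w (w' : nat -> 'cV[C]_2) x :
  (forall n, c n != 0 /\ w' n = c n *: w n) -> P1_cvg v w x -> P1_cvg v w' x.
Proof.
by move=> hc hw e /hw[N hN]; exists N => n /hN; have [hc0 ->] := hc n; rewrite chordalZl.
Qed.

Lemma P1_cvg_subseq w x (phi : nat -> nat) :
  increasing_nat phi -> P1_cvg v w x -> P1_cvg v (w \o phi) x.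
Proof. by move=> hphi hw e /hw; apply: eventually_subseq. Qed.

Lemma vnorm_eventually w W :
  mx_cvg w W -> W != 0 -> eventually (fun n => vnorm (w n) = vnorm W).
Proof.
move=> hw hW; have hm := vnorm_gt0 hW.
apply: eventually_mono (eventually_and (hw ord0 ord0 _ hm) (hw ord_max ord0 _ hm)).
by move=> n []; apply: (max_nav_near hv).
Qed.

Lemma wedge_near w W x d : mx_cvg w W -> 0 < d -> x != 0 ->
  eventually (fun n => v (wedge (w n) x - wedge W x) < d * vnorm x).
Proof.
move=> hw hd hx; have hnx := vnorm_gt0 hx.
apply: eventually_mono (eventually_and (hw ord0 ord0 _ hd) (hw ord_max ord0 _ hd)) => n [h0 h1].
have -> : wedge (w n) x - wedge W x
    = (pc0 (w n) - pc0 W) * pc1 x - (pc1 (w n) - pc1 W) * pc0 x by rewrite /wedge; ring.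
by apply: (navB_lt hv); rewrite (navM hv) mulrC [d * _]mulrC ler_ltM ?(nav_ge0 hv) //
  /vnorm le_max lexx ?orbT.
Qed.

Lemma P1_cvg_of_wedge0 w W x :
  mx_cvg w W -> W != 0 -> x != 0 -> wedge W x = 0 -> P1_cvg v w x.
Proof.
move=> hw hW hx hWx e he; have hnx := vnorm_gt0 hx; have hm := vnorm_gt0 hW.
apply: eventually_mono (eventually_and (vnorm_eventually hw hW)
  (wedge_near hw (mulr_gt0 he hm) hx)) => n [hn].
rewrite hWx subr0 /chordal -/(wedge _ _) -/(vnorm _) -/(vnorm x) hn.
by rewrite ltr_pdivrMr ?mulr_gt0 // mulrA.
Qed.

Lemma wedge0_of_P1_cvg w W x :
  mx_cvg w W -> W != 0 -> x != 0 -> P1_cvg v w x -> wedge W x = 0.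
Proof.
move=> hw hW hx hcv; apply/eqP; rewrite -(nav_eq0 hv); apply: contraT => hWx0.
have hm := vnorm_gt0 hW; have hnx := vnorm_gt0 hx.
have hWx : 0 < v (wedge W x) by rewrite lt_def hWx0 nav_ge0.
have [N hN] := eventually_and (eventually_and (vnorm_eventually hw hW)
  (wedge_near hw (divr_gt0 hWx hnx) hx)) (hcv _ (divr_gt0 hWx (mulr_gt0 hm hnx))).
have [[hn hd] hc] := hN N (leqnn N); rewrite divfK ?gt_eqF // in hd.
move: hc; rewrite /chordal -/(wedge _ _) -/(vnorm _) -/(vnorm x) hn.
by rewrite ltr_pM2r ?invr_gt0 ?mulr_gt0 // (nav_eq_of_ltB hv hd) ltxx.
Qed.

End Chordal.

Section RationalPoints.
Variables (C : fieldType) (F : C -> Prop).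
Hypothesis hF : subfield F.
Implicit Types (x y u : 'cV[C]_2).

Lemma P1_inP x : P1_in F x <-> exists2 l, l != 0 & entries_in F (l *: x).
Proof.
split=> [[l [hl [h0 h1]]] | [l hl hx]].
  by exists l => // i j; rewrite (ord1 j); case: (ord2P i) => ->.
by exists l; split; [|split; apply: hx].
Qed.

Lemma P1_in_entries x : entries_in F x -> P1_in F x.
Proof. by move=> hx; apply/P1_inP; exists 1; rewrite ?oner_neq0 ?scale1r. Qed.

Lemma P1_inZ l x : l != 0 -> P1_in F (l *: x) -> P1_in F x.
Proof.
by move=> hl /P1_inP[l' hl' hx]; apply/P1_inP; exists (l' * l); rewrite ?mulf_neq0 -?scalerA.
Qed.

Lemma P1_in_mul (g : 'M[C]_2) y : entries_in F g -> P1_in F y -> P1_in F (g *m y).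
Proof.
move=> hg /P1_inP[l hl hy]; apply/P1_inP; exists l => //.
by rewrite scalemxAr; apply: entries_in_mul.
Qed.

Lemma P1_in_of_wedge0 u x : P1_in F u -> u != 0 -> x != 0 -> wedge u x = 0 -> P1_in F x.
Proof.
move=> hu hu0 hx /(wedge_eq0_proportional hu0 hx)[l hl hux].
by apply: (P1_inZ hl); rewrite -hux.
Qed.

Lemma P1_in_of_kernel m (N : 'M[C]_(m, 2)) y :
  entries_in F N -> N != 0 -> N *m y = 0 -> y != 0 -> P1_in F y.
Proof.
move=> hN /matrix0Pn[a [b hab]] hNy hy.
apply: (P1_in_of_wedge0 (u := cv2 (- N a ord_max) (N a ord0))) => //.
- by apply: P1_in_entries => i j; rewrite mxE; case: ifP => _; [apply: subfieldN|].
- by rewrite cv2_eq0 oppr_eq0 negb_and; case: (ord2P b) hab => -> ->; rewrite ?orbT.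
- have -> : wedge (cv2 (- N a ord_max) (N a ord0)) y = - (N *m y) a ord0.
    by rewrite /wedge pc0_cv2 pc1_cv2 mxE sum_ord2 /pc0 /pc1; ring.
  by rewrite hNy mxE oppr0.
Qed.

Lemma P1_in_image_singular (M : 'M[C]_2) y :
  entries_in F M -> M != 0 -> \det M = 0 -> M *m y != 0 -> P1_in F (M *m y).
Proof.
(* The image of a singular [M] lies in the kernel of [\adj M]. *)
move=> hM hM0 hdet hMy; apply: (P1_in_of_kernel (N := \adj M)) => //.
- exact: entries_in_adj.
- apply: contra_neq hM0 => h0; rewrite -[M]adj_mx2K h0.
  by apply/matrixP => i j; rewrite !mxE /cofactor det_mx11 !mxE mulr0.
- by rewrite mulmxA mul_adj_mx hdet mul_scalar_mx scale0r.
Qed.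

End RationalPoints.

Section ProjectiveLimits.
Variables (R : realType) (C : fieldType) (v : C -> R).
Hypothesis hv : nonarch_abs v.
Local Notation mx_cvg := (mx_cvg v).

Lemma P1_in_closed F (u : nat -> 'cV[C]_2) x : local_subfield v F ->
  (forall n, u n != 0 /\ P1_in F (u n)) -> x != 0 -> P1_cvg v u x -> P1_in F x.
Proof.
move=> hl hu hx hcv; have hF : subfield F by case: hl.
have /choice[l hl'] : forall n, exists l, l != 0 /\ entries_in F (l *: u n).
  by move=> n; have /P1_inP[l] := (hu n).2; exists l.
have hl0 n (_ : unit) : l n *: u n != 0 by rewrite scaler_eq0 negb_or (hl' n).1 (hu n).1.
have [c [phi [L [hc hphi hL hLcvg]]]] :=
  projective_compact hv (fun=> hl) (fun n (_ : unit) => (hl' n).2) hl0.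
have [hLF hL0] := hL tt.
apply: (P1_in_of_wedge0 (P1_in_entries hLF) hL0 hx).
apply: (wedge0_of_P1_cvg hv (hLcvg tt) hL0 hx).
apply: (P1_cvg_proj hv (c := fun n => c (phi n) tt * l (phi n)) _ (P1_cvg_subseq hphi hcv)) => n.
rewrite scalerA mulf_neq0 //; [by case: (hc (phi n) tt) | by case: (hl' (phi n))].
Qed.

Lemma P1_in_singular_limit F (g : nat -> 'M[C]_2) M y x : local_subfield v F ->
  (forall n, entries_in F (g n) /\ \det (g n) != 0) ->
  mx_cvg g M -> entries_in F M -> M != 0 -> \det M = 0 ->
  y != 0 -> x != 0 -> P1_cvg v (fun n => g n *m y) x -> P1_in F x.
Proof.
move=> hl hg hgM hMF hM0 hdet hy hx hcv; have hF : subfield F by case: hl.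
have [hPy|hPy] := classic (P1_in F y).
  apply: (P1_in_closed hl _ hx hcv) => n; have [hgF hgd] := hg n.
  by split; [apply: mulmx_neq0 | apply: P1_in_mul].
have hMy : M *m y != 0.
  by apply/eqP => hMy; apply: hPy; exact: (P1_in_of_kernel hF hMF hM0 hMy hy).
apply: (P1_in_of_wedge0 (P1_in_image_singular hF hMF hM0 hdet hMy) hMy hx).
have hgy : mx_cvg (fun n => g n *m y) (M *m y) := mx_cvgM hv hgM (mx_cvg_cst hv y).
exact: (wedge0_of_P1_cvg hv hgy hMy hx hcv).
Qed.

End ProjectiveLimits.

Section DiagonalPowers.
Variables (R : realType) (C : fieldType) (v : C -> R).
Hypothesis hv : nonarch_abs v.
Variable pi : C.
Hypothesis hpi : 0 < v pi < 1.

Lemma diag_pow_proj_inj (N : 'M[C]_2) c p q :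
  v (N ord0 ord0) = v (N ord_max ord_max) ->
  diag_pow pi q = c *: (diag_pow pi p *m N) -> p = q.
Proof.
move=> hN /matrixP e; have := e ord0 ord0; have := e ord_max ord_max.
rewrite !mxE !sum_ord2 !mxE /= mul1r !mul0r addr0 add0r => e11 e00.
have : v pi ^+ q = v pi ^+ p.
  by rewrite -(navX hv) e11 !(navM hv) mulrCA -hN -(navM hv) -e00 (nav1 hv) mulr1 (navX hv).
by case/andP: hpi => h0 h1 /(ieexprIn h0 (negbT (lt_eqF h1))).
Qed.

Lemma diag_orbit_proj_inj (A : 'M[C]_2) (gm km : nat -> 'M[C]_2) (m : nat -> nat) N :
  A \in unitmx -> (forall n, A *m diag_pow pi (m n) = gm n *m km n /\ km n \in unitmx) ->
  (forall i j, (N <= i)%N -> (N <= j)%N -> forall a b,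
    v ((invmx (km i) *m km j) a b - (1%:M : 'M[C]_2) a b) < 1) ->
  forall i j c, (N <= i)%N -> (N <= j)%N -> gm j = c *: gm i -> m i = m j.
Proof.
move=> hA hfac hN i j c hi hj e; have [ei hki] := hfac i; have [ej _] := hfac j.
apply: (diag_pow_proj_inj (N := invmx (km i) *m km j) (c := c)).
  have hN1 a : v ((invmx (km i) *m km j) a a) = 1.
    rewrite -(nav1 hv); apply: (nav_eq_of_ltB hv).
    by rewrite (nav1 hv); move: (hN i j hi hj a a); rewrite [(1%:M : 'M[C]_2) a a]mxE eqxx mulr1n.
  by rewrite !hN1.
rewrite -(mulKmx hA (diag_pow pi (m j))) ej e -scalemxAl -scalemxAr; congr (_ *: _).
by rewrite -[gm i](mulmxK hki) -ei !mulmxA mulVmx // mul1mx.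
Qed.

Lemma diag_pow_contract (m : nat -> nat) (w : nat -> 'cV[C]_2) a :
  mx_cvg v w (cv2 a 0) -> mx_cvg v (fun n => diag_pow pi (m n) *m w n) (cv2 a 0).
Proof.
move=> hw i j; rewrite (ord1 j).
have Dw n : diag_pow pi (m n) *m w n = cv2 (pc0 (w n)) (pi ^+ m n * pc1 (w n)).
  by rewrite [w n]cv2_eta mul_mx2_cv2 !pc0_cv2 !pc1_cv2 mul1r !mul0r addr0 add0r.
case: (ord2P i) => ->.
  by apply: cvg_eventually_eq (hw ord0 ord0); exists 0%N => n _; rewrite Dw mxE.
move=> e he; apply: eventually_mono (hw ord_max ord0 e he) => n.
rewrite Dw !mxE /= !subr0 (navM hv) (navX hv); apply: le_lt_trans.
by case/andP: hpi => h0 h1; rewrite ler_piMl ?(nav_ge0 hv) ?exprn_ile1 // ltW.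
Qed.

End DiagonalPowers.

Section LimitSet.
Variables (R : realType) (C : fieldType) (v : C -> R).
Hypothesis hv : nonarch_abs v.
Variables (S : finType) (F : S -> C -> Prop).
Hypothesis hF : forall s, local_subfield v (F s).
Variable Gam : (S -> 'M[C]_2) -> Prop.
Hypothesis hsub : PGL2_subgroup F Gam.
Local Notation mx_cvg := (mx_cvg v).

Let subfieldF s : subfield (F s). Proof. by case: (hF s). Qed.

Lemma GL2S_unit g s : GL2S F g -> g s \in unitmx.
Proof. by move=> hg; rewrite unitmxE unitfE; case: (hg s). Qed.

Lemma PGL2_subgroup_scalar_mul (c : S -> C) g :
  (forall s, F s (c s) /\ c s != 0) -> Gam g -> Gam (mulS (fun s => (c s)%:M) g).
Proof.
case: hsub => _ hZ hMul _ hc hg; apply: hMul hg; apply: hZ => s; last by exists (c s).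
have [hFc hc0] := hc s; split; first by rewrite det_scalar expf_neq0.
exact: entries_in_scalar.
Qed.

Lemma proj_eq_of_central g h :
  GL2S F g -> GL2S F h -> central (mulS (invS g) h) -> proj_eq g h.
Proof.
move=> hg hh hc s; have [l hl] := hc s.
have e : h s = l *: g s by rewrite -(mulKVmx (GL2S_unit s hg) (h s)) [_ *m h s]hl mul_mx_scalar.
exists l; split; last exact: e.
by apply/eqP => l0; move: (hh s).1; rewrite e l0 scale0r det0 eqxx.
Qed.

Lemma proj_eq_scalar_mul (c d : S -> C) g h :
  (forall s, c s != 0 /\ d s != 0) ->
  proj_eq (mulS (fun s => (c s)%:M) g) (mulS (fun s => (d s)%:M) h) -> proj_eq g h.
Proof.
move=> hcd hp s; have [hc hd] := hcd s; have [l [hl e]] := hp s.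
exists ((d s)^-1 * l * c s); split; first by rewrite !mulf_neq0 ?invr_neq0.
move: e; rewrite /mulS /= !mul_scalar_mx scalerA => e.
by rewrite -(scalerK hd (h s)) e scalerA mulrA.
Qed.

Lemma distinct_limit_singular (g : nat -> S -> 'M[C]_2) M :
  PGL2_discrete v Gam -> (forall n, Gam (g n)) ->
  (forall i j, i != j -> ~ proj_eq (g i) (g j)) ->
  (forall s, mx_cvg (fun n => g n s) (M s)) -> exists s, \det (M s) = 0.
Proof.
move=> [e [he hdisc]] hg hdist hgM; apply: NNPP => hdet.
have hdet' s : \det (M s) != 0 by apply/eqP => h0; apply: hdet; exists s.
have [N hN] := eventually_forall (fun s => invmx_mul_near1 hv (hgM s) (hdet' s) he).
case: hsub => hGL _ hMul hInv.
apply: (hdist N N.+1); first by rewrite neq_ltn ltnSn.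
apply: proj_eq_of_central; [exact: hGL | exact: hGL |].
apply: hdisc; first by apply: hMul => //; apply: hInv.
by move=> s a b; apply: (hN N (leqnn N) s N N.+1 (leqnn N) (leqnSn N)).
Qed.

Lemma limit_point_P1_in x : PGL2_discrete v Gam ->
  P1S_pt x -> limit_point v Gam x -> exists s, P1_in (F s) (x s).
Proof.
move=> hdisc hx [y [hy [gam [hG hdist hcv]]]]; case: hsub => hGL _ _ _.
have hgam0 k s : gam k s != 0 by apply: contraNneq (hGL _ (hG k) s).1 => ->; rewrite det0.
have [c [phi [M [hc hphi hM hcvM]]]] :=
  projective_compact hv hF (fun k s => (hGL _ (hG k) s).2) hgam0.
pose ghat n := mulS (fun s => (c n s)%:M) (gam n).
have ghatE n s : ghat n s = c n s *: gam n s by rewrite /ghat /mulS mul_scalar_mx.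
have hghat s : mx_cvg (fun n => ghat (phi n) s) (M s).
  by apply: mx_cvg_ext (hcvM s) => n; rewrite ghatE.
have hdist' i j : i != j -> ~ proj_eq (ghat (phi i)) (ghat (phi j)).
  move=> hij /proj_eq_scalar_mul hp; apply: (hdist (phi i) (phi j)).
    by rewrite (inj_eq (increasing_nat_inj hphi)).
  by apply: hp => s; rewrite (hc (phi i) s).2 (hc (phi j) s).2.
have [s hs] := distinct_limit_singular hdisc
  (fun n => PGL2_subgroup_scalar_mul (hc (phi n)) (hG (phi n))) hdist' hghat.
exists s; have [hMF hM0] := hM s.
apply: (P1_in_singular_limit hv (hF s) _ (hghat s) hMF hM0 hs (hy s) (hx s)).
- move=> n; rewrite ghatE; have [hdg hFg] := hGL _ (hG (phi n)) s.
  have [hFc hc0] := hc (phi n) s.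
  by split; [apply: entries_in_scale | rewrite detZ mulf_neq0 ?expf_neq0].
- apply: (P1_cvg_proj hv (c := fun n => c (phi n) s) _ (P1_cvg_subseq hphi (hcv s))) => n.
  by rewrite ghatE -scalemxAl; split; first by case: (hc (phi n) s).
Qed.

Lemma cocompact_factor (h : nat -> S -> 'M[C]_2) :
  PGL2_cocompact v F Gam -> (forall n, GL2S F (h n)) ->
  exists gm km phi k, [/\ forall n, Gam (gm n),
    forall n s, h n s = gm n s *m km n s /\ km n s \in unitmx,
    increasing_nat phi &
    forall s, \det (k s) != 0 /\ mx_cvg (fun n => km (phi n) s) (k s)].
Proof.
move=> [K [hKGL hKc hdec]] hh.
have /choice[gk hgk] : forall n, exists gk, [/\ Gam gk.1, K gk.2 & h n = mulS gk.1 gk.2].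
  by move=> n; have [gm [km hgk]] := hdec _ (hh n); exists (gm, km).
have [phi [hphi [k [hkK hk]]]] := hKc (fun n => (gk n).2) (fun n => let: And3 _ hK _ := hgk n in hK).
exists (fun n => (gk n).1), (fun n => (gk n).2), phi, k; split => //.
- by move=> n; case: (hgk n).
- by move=> n s; have [_ hK ->] := hgk n; split => //; apply: GL2S_unit (hKGL _ hK).
- by move=> s; split; [case: (hKGL _ hkK s) | move=> a b; apply: hk].
Qed.

Lemma GL2S_at s0 (g : 'M[C]_2) : \det g != 0 -> entries_in (F s0) g ->
  GL2S F (fun s => if s == s0 then g else 1%:M).
Proof.
move=> hg hgF s; have [->|hs] := eqVneq s s0; rewrite ?eqxx ?(negbTE hs); split => //.
  by rewrite det1 oner_neq0.
exact: (entries_in_scalar (subfieldF s) (subfield1 (subfieldF s))).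
Qed.

Lemma P1_in_limit_point x s0 : PGL2_cocompact v F Gam ->
  P1S_pt x -> P1_in (F s0) (x s0) -> limit_point v Gam x.
Proof.
move=> hcoc hx /P1_inP[l hl hlx].
have hlx0 : l *: x s0 != 0 by rewrite scaler_eq0 negb_or hl hx.
have [A [hAF hAd hAe]] := first_column_GL2 (subfieldF s0) hlx hlx0.
have [_ [pi [Fpi hpi]] _] := hF s0.
have pi0 : pi != 0 by rewrite -(nav_eq0 hv) gt_eqF //; case/andP: hpi.
pose h n s := if s == s0 then A *m diag_pow pi n else 1%:M.
have hGLh n : GL2S F (h n).
  apply: GL2S_at; first by rewrite det_mulmx det_diag_pow mulf_neq0 ?expf_neq0.
  exact: (entries_in_mul (subfieldF s0) hAF (entries_in_diag_pow _ (subfieldF s0) Fpi)).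
have [gm [km [phi [k [hgm hfac hphi hk]]]]] := cocompact_factor hcoc hGLh.
have [N hN] := invmx_mul_near1 hv (hk s0).2 (hk s0).1 ltr01.
have hshift : increasing_nat (addn^~ N) by move=> n; rewrite ltn_add2r.
pose psi := phi \o addn^~ N.
have hfac_cvg s z := factor_mul_cvg hv z (fun n => hfac n s) (hk s).1
  (mx_cvg_subseq hshift (hk s).2).
pose e s := if s == s0 then cv2 1 0 else x s.
exists (fun s => k s *m e s); split.
  move=> s; apply: mulmx_neq0 (hk s).1 _; rewrite /e.
  by have [_|_] := eqVneq s s0; rewrite ?cv2_eq0 ?oner_eq0.
exists (gm \o psi); split => [n | i j hij /(_ s0)[c [_ hc]] | s]; first exact: hgm.
  move/eqP: hij; apply; apply/eqP; rewrite -(eqn_add2r N); apply/eqP.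
  apply: (increasing_nat_inj hphi).
  have hfac0 n : A *m diag_pow pi (phi n) = gm (phi n) s0 *m km (phi n) s0 /\ km (phi n) s0 \in unitmx.
    by rewrite -(hfac _ s0).1 /h eqxx (hfac _ s0).2.
  have hAu : A \in unitmx by rewrite unitmxE unitfE.
  exact: (diag_orbit_proj_inj hv hpi hAu hfac0 (hN N (leqnn N)) (leq_addl _ _) (leq_addl _ _) hc).
rewrite /e; have [->|hs] := eqVneq s s0; rewrite ?eqxx ?(negbTE hs).
  have [w hw hgw] := hfac_cvg s0 (cv2 1 0).
  have := mx_cvgM hv (mx_cvg_cst hv A) (diag_pow_contract hv hpi psi hw); rewrite hAe => hAw.
  apply: (P1_cvg_of_wedge0 hv (mx_cvg_ext _ hAw) hlx0 (hx s0)); last by rewrite wedgeZl wedgexx mulr0.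
  by move=> n; rewrite /= hgw /h eqxx mulmxA.
have [w hw hgw] := hfac_cvg s (x s).
apply: (P1_cvg_of_wedge0 hv (mx_cvg_ext _ hw) (hx s) (hx s) (wedgexx _)).
by move=> n; rewrite /= hgw /h (negbTE hs) mul1mx.
Qed.

End LimitSet.

Theorem proposition2p10 (R : realType) (C : fieldType) (v : C -> R) (p : nat)
  (hp : prime p) (hC : completed_alg_closure_Qp_or_FpT v p)
  (S : finType) (hS : (0 < #|S|)%N) (F : S -> C -> Prop)
  (hF : forall s, local_subfield v (F s))
  (Gam : (S -> 'M[C]_2) -> Prop)
  (hsub : PGL2_subgroup F Gam) (hdisc : PGL2_discrete v Gam)
  (hcoc : PGL2_cocompact v F Gam) :
  plectic_with v F Gam (fun s => P1_in (F s)).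
Proof.
have hv : nonarch_abs v by case: hC.
split=> // x hx; split.
- exact: (limit_point_P1_in hv hF hsub hdisc hx).
- by case=> s0 hs0; apply: (P1_in_limit_point hv hF hcoc hx hs0).
Qed.
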